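(* There exists an absolute constant $C>0$ such that the following holds. Let $n\ge1$, $0<q\le 1-\frac2n$ and $\pi\sim\mu_{n,q}$. Let $1\le m\le n$ and let $I=(i_1,\dots,i_m)\subseteq\{1,\dots,n\}$ be an increasing sequence of integers. Then $$\mathbb{P}\big(\pi(i_{k+1})>\pi(i_k)\text{ for all }1\le k\le m-1\big)\le\left(\frac{Cn(1-q)}{m}\right)^m.$$
   Context: For $q>0$ and $n\ge1$, $\mu_{n,q}(\pi)=q^{\mathrm{inv}(\pi)}/Z_{n,q}$ on $S_n$, with $\mathrm{inv}(\pi)$ the number of pairs $i<j$ with $\pi(i)>\pi(j)$ and $Z_{n,q}$ a normalizing constant. *)

From mathcomp Require Import all_boot all_order all_algebra all_fingroup.
Set Implicit Arguments. Unset Strict Implicit. Unset Printing Implicit Defensive.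
Import Order.TTheory GRing.Theory Num.Theory.
Local Open Scope ring_scope.

Definition inv_count (n : nat) (s : 'S_n) : nat :=
  #|[set p : 'I_n * 'I_n | (p.1 < p.2)%N && (s p.2 < s p.1)%N]|.

Definition mallows_Z (R : numFieldType) (n : nat) (q : R) : R :=
  \sum_(s : 'S_n) q ^+ inv_count s.

Definition mallows (R : numFieldType) (n : nat) (q : R) (s : 'S_n) : R :=
  q ^+ inv_count s / mallows_Z n q.

Definition mallows_prob (R : numFieldType) (n : nat) (q : R)
  (A : pred 'S_n) : R :=
  \sum_(s : 'S_n | A s) mallows q s.

From mathcomp Require Import all_boot all_order all_algebra all_fingroup.
From mathcomp Require Import ring lra.
Import Order.TTheory GRing.Theory Num.Theory.
Set Implicit Arguments. Unset Strict Implicit. Unset Printing Implicit Defensive.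

(* Let e = 1 - q and S = {i_1, ..., i_m}; the event forces the permutation to
   be increasing on S.  Cut {0, ..., n-1} into b consecutive windows of length
   L ~ 1/(8e).  Composing a permutation increasing on S with any of the k!
   permutations of the k points of S inside one window yields distinct
   permutations that are still increasing on S outside that window, at the
   cost of at most 2kL inversions, i.e. of a factor q^(2kL) >= 2^-k.  Peeling
   off the windows one by one and using k! >= N^k / (2^k 2^N) shows that the
   Mallows weight of the permutations increasing on S is at most (8/N)^m Z
   for N = m / b, and b <= 16ne. *)

Lemma leq_bin_exp2 n k : 'C(n, k) <= 2 ^ n.
Proof.
elim: n k => [|n IH] [|k] //; first by rewrite bin0 expn_gt0.
by rewrite binS expnS mul2n -addnn leq_add.
Qed.

Lemma leq_exp_ffact N k : N ^ k <= (N + k) ^_ k.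
Proof.
elim: k => [|k IH]; first by rewrite ffactn0.
by rewrite addnS ffactSS expnS leq_mul // leqW // leq_addr.
Qed.

Lemma leq_exp_fact N k : N ^ k <= k`! * 2 ^ k * 2 ^ N.
Proof.
rewrite (leq_trans (leq_exp_ffact N k)) // -bin_ffact.
by rewrite mulnC -mulnA -expnD leq_mul2l addnC leq_bin_exp2 orbT.
Qed.

Lemma inv_count_mul n (s t : 'S_n) :
  inv_count (s * t)%g <= inv_count s + inv_count t.
Proof.
pose f (p : 'I_n * 'I_n) := (s p.1, s p.2).
have f_inj : injective f by move=> [a b] [c d] [/perm_inj -> /perm_inj ->].
rewrite /inv_count -(card_preimset [set p : 'I_n * 'I_n | (p.1 < p.2)%N && (t p.2 < t p.1)%N] f_inj).
apply: leq_trans (leq_card_setU _ _); apply: subset_leq_card.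
apply/subsetP => -[x y]; rewrite !inE /= !permM => /andP[xy txy].
case: (ltngtP (s x) (s y)) => [sxy|sxy|/val_inj/perm_inj exy].
- by rewrite txy orbT.
- by rewrite xy.
- by rewrite exy ltnn in xy.
Qed.

Definition convex n (W : {set 'I_n}) := forall x y z : 'I_n,
  x \in W -> z \in W -> (x < y)%N -> (y < z)%N -> y \in W.

(* An inversion of [t] involves a point of [K]; if both points moved, both lie
   in [K], otherwise the fixed point lies between the other one and its image. *)
Lemma inv_count_perm_on n (K W : {set 'I_n}) (t : 'S_n) :
  K \subset W -> convex W -> perm_on K t -> inv_count t <= 2 * (#|K| * #|W|).
Proof.
move=> /subsetP KW cW tK; rewrite /inv_count mul2n -addnn {2}mulnC -!cardsX.
apply: leq_trans (leq_card_setU _ _); apply: subset_leq_card.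
apply/subsetP => -[x y]; rewrite !inE /= => /andP[xy txy].
have tKK z : z \in K -> t z \in K by move=> zK; rewrite perm_closed.
case xK: (x \in K); case yK: (y \in K) => /=.
- by rewrite KW.
- rewrite (out_perm tK (negbT yK)) in txy.
  by rewrite (cW x y (t x)) ?KW ?tKK.
- rewrite (out_perm tK (negbT xK)) in txy.
  by rewrite andbT (cW (t y) x y) ?KW ?tKK.
- by rewrite (out_perm tK (negbT xK)) (out_perm tK (negbT yK)) ltnNge ltnW in txy.
Qed.

Definition increasing_on n (S : {set 'I_n}) (s : 'S_n) : bool :=
  [forall x in S, forall y in S, (x < y)%N ==> (s x < s y)%N].

Lemma increasing_onP n (S : {set 'I_n}) (s : 'S_n) :
  reflect {in S &, forall x y : 'I_n, (x < y)%N -> (s x < s y)%N} (increasing_on S s).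
Proof.
apply: (iffP forall_inP) => [h x y xS yS | h x xS].
  by move/forall_inP: (h x xS) => /(_ y yS) /implyP.
by apply/forall_inP => y yS; apply/implyP; apply: h.
Qed.

Lemma increasing_on_set0 n (s : 'S_n) : increasing_on set0 s.
Proof. by apply/increasing_onP => x y; rewrite inE. Qed.

Lemma increasing_onV n (K : {set 'I_n}) (r : 'S_n) :
  perm_on K r -> increasing_on K r -> increasing_on K r^-1.
Proof.
move=> rK /increasing_onP rI; apply/increasing_onP => x y xK yK xy.
have r'K z : z \in K -> (r^-1)%g z \in K by move=> zK; rewrite perm_closed // perm_onV.
case: (ltngtP ((r^-1)%g x) ((r^-1)%g y)) => // [yx|/val_inj/perm_inj exy].
- by have := rI _ _ (r'K y yK) (r'K x xK) yx; rewrite !permKV ltnNge ltnW.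
- by rewrite exy ltnn in xy.
Qed.

Definition rank_in n (K : {set 'I_n}) (x : 'I_n) := #|[set y in K | (y < x)%N]|.

Lemma rank_in_lt n (K : {set 'I_n}) (a b : 'I_n) :
  a \in K -> (a < b)%N -> rank_in K a < rank_in K b.
Proof.
move=> aK ab; apply: proper_card; apply/properP; split.
  by apply/subsetP => y; rewrite !inE => /andP[-> ya]; apply: ltn_trans ab.
by exists a; rewrite !inE ?aK ?ab ?ltnn.
Qed.

Lemma rank_in_le_perm n (K : {set 'I_n}) (r : 'S_n) x :
  perm_on K r -> increasing_on K r -> x \in K -> rank_in K x <= rank_in K (r x).
Proof.
move=> rK /increasing_onP rI xK; rewrite /rank_in -(card_imset _ (@perm_inj _ r)).
apply/subset_leq_card/subsetP => z /imsetP[y]; rewrite !inE => /andP[yK yx] ->.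
by rewrite perm_closed // yK rI.
Qed.

Lemma perm_on_increasing_eq1 n (K : {set 'I_n}) (r : 'S_n) :
  perm_on K r -> increasing_on K r -> r = 1%g.
Proof.
move=> rK rI; apply/permP => x; rewrite perm1.
case xK: (x \in K); last by rewrite (out_perm rK (negbT xK)).
have rxK : r x \in K by rewrite perm_closed.
have le_x_rx := rank_in_le_perm rK rI xK.
have := rank_in_le_perm (perm_onV rK) (increasing_onV rK rI) rxK.
rewrite permK => le_rx_x.
case: (ltngtP x (r x)) => [xrx|rxx|/val_inj //].
- by have := rank_in_lt xK xrx; rewrite ltnNge le_rx_x.
- by have := rank_in_lt rxK rxx; rewrite ltnNge le_x_rx.
Qed.

(* If [t * s = t' * s'] with [s, s'] increasing on [S] and [t, t'] permuting
   [K], then [t^-1 * t'] permutes [K] increasingly, hence is the identity. *)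
Lemma mulg_perm_on_inj n (S K : {set 'I_n}) : K \subset S ->
  {in [set p : 'S_n * 'S_n | increasing_on S p.1 && perm_on K p.2] &,
    injective (fun p => (p.2 * p.1)%g)}.
Proof.
move=> /subsetP KS [s t] [s' t']; rewrite !inE /= => /andP[sS tK] /andP[s'S t'K] e.
pose r := (t^-1 * t')%g.
have es : s = (r * s')%g by rewrite -mulgA -e mulKg.
have rK : perm_on K r by rewrite perm_onM // perm_onV.
have rKK z : z \in K -> r z \in K by move=> zK; rewrite perm_closed.
have /(perm_on_increasing_eq1 rK) r1 : increasing_on K r.
  apply/increasing_onP => x y xK yK xy.
  have := increasing_onP _ _ sS x y (KS x xK) (KS y yK) xy; rewrite es !(permM r s').
  case: (ltngtP (r x) (r y)) => // [ryx|/val_inj/perm_inj exy].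
  - have /ltnW := increasing_onP _ _ s'S _ _ (KS _ (rKK y yK)) (KS _ (rKK x xK)) ryx.
    by rewrite leqNgt => /negbTE->.
  - by rewrite exy ltnn in xy.
have ss' : s = s' by rewrite es r1 mul1g.
by rewrite ss' -(mulKVg t t') -/r r1 mulg1.
Qed.

Local Open Scope ring_scope.

Lemma ler_sum_subset (R : numDomainType) (T : finType) (P Q : pred T)
    (F : T -> R) :
  (forall i, 0 <= F i) -> (forall i, P i -> Q i) ->
  \sum_(i | P i) F i <= \sum_(i | Q i) F i.
Proof.
move=> F_ge0 PQ; rewrite big_mkcond [X in _ <= X]big_mkcond /=.
apply: ler_sum => i _; case: ifP => [/PQ -> //|_]; by case: (Q i).
Qed.

Section IncreasingWeight.
Variables (R : realFieldType) (n : nat) (q : R).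
Hypothesis q_gt0 : 0 < q.

Definition weight (s : 'S_n) : R := q ^+ inv_count s.

Definition incr_weight (S : {set 'I_n}) : R :=
  \sum_(s | increasing_on S s) weight s.

Lemma weight_ge0 s : 0 <= weight s.
Proof. by rewrite exprn_ge0 // ltW. Qed.

Lemma incr_weight_ge0 S : 0 <= incr_weight S.
Proof. exact/sumr_ge0/(fun s _ => weight_ge0 s). Qed.

Lemma incr_weight_set0 : incr_weight set0 = mallows_Z n q.
Proof. by apply: eq_bigl => s; rewrite increasing_on_set0. Qed.

Hypothesis q_le1 : q <= 1.

Lemma sum_weight_perm_on (K W : {set 'I_n}) : K \subset W -> convex W ->
  (#|K|`!)%:R * q ^+ (2 * (#|K| * #|W|)) <= \sum_(t | perm_on K t) weight t.
Proof.
move=> KW cW; rewrite -card_perm -(sum1_card (perm_on K)) natr_sum mulr_suml.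
apply: ler_sum => t tK; rewrite mul1r ler_wiXn2l ?(ltW q_gt0) //.
exact: inv_count_perm_on.
Qed.

(* Every [s] increasing on [S], composed with any [t] permuting [S :&: W],
   gives a distinct permutation increasing on [S :\: W]. *)
Lemma incr_weight_block (S W : {set 'I_n}) : convex W ->
  incr_weight S * (#|S :&: W|`!)%:R * q ^+ (2 * (#|S :&: W| * #|W|))
    <= incr_weight (S :\: W).
Proof.
move=> cW; set K := S :&: W.
pose A := [set p : 'S_n * 'S_n | increasing_on S p.1 && perm_on K p.2].
apply: le_trans (_ : incr_weight S * \sum_(t | perm_on K t) weight t <= _).
  by rewrite -mulrA ler_wpM2l ?incr_weight_ge0 ?sum_weight_perm_on ?subsetIr.
apply: le_trans (_ : \sum_(p in A) weight (p.2 * p.1)%g <= _).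
  rewrite /incr_weight mulr_suml; under eq_bigr do rewrite mulr_sumr.
  rewrite pair_big_dep /=.
  under [X in _ <= X]eq_bigl do rewrite inE.
  apply: ler_sum => -[s t] _ /=.
  by rewrite -exprD ler_wiXn2l ?(ltW q_gt0) // addnC inv_count_mul.
rewrite -(big_imset _ (mulg_perm_on_inj (subsetIl S W))) /=.
apply: ler_sum_subset => [s|u /imsetP[[s t]]]; first exact: weight_ge0.
rewrite inE /= => /andP[sS tK] ->; apply/increasing_onP => x y.
rewrite !inE => /andP[xW xS] /andP[yW yS] xy.
have outK z : z \notin W -> z \notin K by rewrite inE => /negbTE->; rewrite andbF.
by rewrite !permM !(out_perm tK) ?outK // (increasing_onP _ _ sS).
Qed.

Lemma incr_weight_window (S W : {set 'I_n}) (L N : nat) :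
  convex W -> (#|W| <= L)%N ->
  incr_weight S * (N%:R * q ^+ (2 * L) / 2) ^+ #|S :&: W|
    <= 2 ^+ N * incr_weight (S :\: W).
Proof.
move=> cW WL; set k := #|S :&: W|.
have fact_k : (N%:R * q ^+ (2 * L) / 2) ^+ k
    <= 2 ^+ N * ((k`!)%:R * q ^+ (2 * (k * #|W|))).
  rewrite expr_div_n exprMn -exprM ler_pdivrMr ?exprn_gt0 //.
  have N_k : N%:R ^+ k <= (k`!)%:R * 2 ^+ k * 2 ^+ N :> R.
    by rewrite -!natrX -!natrM ler_nat leq_exp_fact.
  have q_k : q ^+ (2 * L * k) <= q ^+ (2 * (k * #|W|)).
    by rewrite ler_wiXn2l ?(ltW q_gt0) // -mulnA leq_mul2l mulnC leq_mul2r WL orbT.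
  apply: le_trans (ler_pM _ _ N_k q_k) _; rewrite ?exprn_ge0 ?ler0n ?(ltW q_gt0) //; lra.
apply: le_trans (ler_wpM2l (incr_weight_ge0 S) fact_k) _.
rewrite mulrCA ler_wpM2l ?exprn_ge0 ?ler0n // mulrA.
exact: incr_weight_block.
Qed.

Definition window (L j : nat) := [set x : 'I_n | (x %/ L)%N == j].

Definition before_window (S : {set 'I_n}) (L j : nat) :=
  [set x in S | (x %/ L < j)%N].

Lemma convex_window L j : convex (window L j).
Proof.
move=> x y z; rewrite !inE => /eqP xj /eqP zj xy yz.
by rewrite eqn_leq -{1}zj -xj !leq_div2r // ltnW.
Qed.

Lemma card_window L j : (0 < L)%N -> (#|window L j| <= L)%N.
Proof.
move=> L_gt0; pose f (x : 'I_n) : 'I_L := Ordinal (ltn_pmod x L_gt0).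
rewrite -(@card_in_imset _ _ f); first by rewrite -[L in (_ <= L)%N]card_ord max_card.
move=> x y; rewrite !inE => /eqP xj /eqP yj [exy].
by apply: val_inj; rewrite /= (divn_eq x L) (divn_eq y L) xj yj exy.
Qed.

Lemma incr_weight_before_window S L N j : (0 < L)%N ->
  incr_weight (before_window S L j)
      * (N%:R * q ^+ (2 * L) / 2) ^+ #|before_window S L j|
    <= 2 ^+ (N * j) * mallows_Z n q.
Proof.
move=> L_gt0; set x := _ / 2.
have x_ge0 : 0 <= x by rewrite divr_ge0 ?mulr_ge0 ?exprn_ge0 ?ler0n ?(ltW q_gt0).
elim: j => [|j IH].
  have -> : before_window S L 0 = set0 by apply/setP => y; rewrite !inE andbF.
  by rewrite cards0 !expr0 muln0 mulr1 mul1r incr_weight_set0.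
set T := before_window S L j.+1; set W := window L j.
have TW : T :\: W = before_window S L j.
  apply/setP => y; rewrite !inE ltnS leq_eqVlt.
  by case: eqP => [->|_]; rewrite ?ltnn ?andbF //= ?andbT.
have cardT : #|T| = (#|T :&: W| + #|T :\: W|)%N by rewrite cardsID.
rewrite cardT exprD mulrA mulnS exprD.
apply: le_trans (ler_wpM2r (exprn_ge0 _ x_ge0)
  (incr_weight_window T N (@convex_window L j) (@card_window L j L_gt0))) _.
by rewrite -!mulrA ler_wpM2l ?exprn_ge0 // TW.
Qed.

Lemma incr_weight_le_windows S L N b : (0 < L)%N -> (n <= b * L)%N ->
  incr_weight S * (N%:R * q ^+ (2 * L) / 2) ^+ #|S|
    <= 2 ^+ (N * b) * mallows_Z n q.
Proof.
move=> L_gt0 nbL; have -> : S = before_window S L b.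
  apply/setP => x; rewrite inE; case: (x \in S) => //=.
  by rewrite ltn_divLR // (leq_trans (ltn_ord x) nbL).
exact: incr_weight_before_window.
Qed.

End IncreasingWeight.

Lemma mallows_Z_gt0 (R : realFieldType) n (q : R) : 0 < q -> 0 < mallows_Z n q.
Proof.
move=> q_gt0; have w_ge0 s : 0 <= q ^+ inv_count s by rewrite exprn_ge0 ?(ltW q_gt0).
rewrite lt_def sumr_ge0 // andbT psumr_neq0 //.
by apply/hasP; exists 1%g; rewrite ?mem_index_enum //= exprn_gt0.
Qed.

Lemma mallows_prob_le_incr_weight (R : realFieldType) n (q : R)
    (S : {set 'I_n}) (A : pred 'S_n) :
  0 < q -> (forall s, A s -> increasing_on S s) ->
  mallows_prob q A <= incr_weight q S / mallows_Z n q.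
Proof.
move=> q_gt0 AS; have Z_gt0 := mallows_Z_gt0 n q_gt0.
rewrite /mallows_prob -mulr_suml ler_wpM2r ?invr_ge0 ?(ltW Z_gt0) //.
exact: ler_sum_subset (weight_ge0 q_gt0) AS.
Qed.

Lemma mallows_prob_le1 (R : realFieldType) n (q : R) (A : pred 'S_n) :
  0 < q -> mallows_prob q A <= 1.
Proof.
move=> q_gt0; have A_set0 s : A s -> increasing_on set0 s by rewrite increasing_on_set0.
apply: le_trans (mallows_prob_le_incr_weight q_gt0 A_set0) _.
by rewrite incr_weight_set0 divff ?gt_eqF ?mallows_Z_gt0.
Qed.

Lemma bernoulli_le (R : realFieldType) (e : R) k :
  e <= 1 -> 1 - k%:R * e <= (1 - e) ^+ k.
Proof.
move=> e_le1; elim: k => [|k IH]; first by rewrite mul0r subr0 expr0.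
have ek2 : 0 <= k%:R * e ^+ 2 by rewrite mulr_ge0 ?ler0n ?sqr_ge0.
rewrite exprS -natr1; apply: le_trans (ler_wpM2l _ IH); last by rewrite subr_ge0.
by rewrite -subr_ge0; set y := _ - _; have -> : y = k%:R * e ^+ 2 by rewrite /y; ring.
Qed.

Lemma exists_window_length (R : realFieldType) (e : R) n :
  4 * e <= 1 -> 1 < 4 * n%:R * e ->
  exists L, [/\ (0 < L)%N, (L <= n)%N, 4 * L%:R * e <= 1 & 1 < 8 * L%:R * e].
Proof.
move=> e4 ne4; have n_gt0 : (0 < n)%N by case: n ne4 => //; rewrite mulr0 mul0r ltr10.
pose P l := (l <= n)%N && (4 * l%:R * e <= 1).
have P1 : P 1%N by rewrite /P n_gt0 mulr1.
have exP : exists l, P l by exists 1%N.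
have ubP l : P l -> (l <= n)%N by case/andP.
case: (ex_maxnP exP ubP) => L /andP[Ln L4] Lmax.
have L_gt0 : (0 < L)%N by apply: Lmax.
exists L; split => //; rewrite ltNge; apply/negP => L8.
have LSn : (L.+1 <= n)%N.
  rewrite ltn_neqAle Ln andbT; apply/eqP => eLn; move: L4; rewrite eLn; lra.
have /Lmax : P L.+1.
  rewrite /P LSn -natr1; have : 1 <= L%:R :> R by rewrite ler1n.
  nra.
by rewrite ltnn.
Qed.

Lemma incr_weight_le_block_pow (R : realFieldType) n (q : R) (S : {set 'I_n})
    (L N b : nat) :
  0 < q -> q <= 1 -> (0 < L)%N -> (n <= b * L)%N -> (0 < N)%N ->
  (N * b <= #|S|)%N -> 1 / 2 <= q ^+ (2 * L) ->
  incr_weight q S <= (8 / N%:R) ^+ #|S| * mallows_Z n q.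
Proof.
move=> q_gt0 q_le1 L_gt0 nbL N_gt0 NbS q2L.
have N_gt0R : 0 < N%:R :> R by rewrite ltr0n.
have x_ge : N%:R / 4 <= N%:R * q ^+ (2 * L) / 2 :> R by nra.
have Z_ge0 := ltW (mallows_Z_gt0 n q_gt0).
have key : incr_weight q S * (N%:R / 4) ^+ #|S| <= 2 ^+ #|S| * mallows_Z n q.
  apply: le_trans (ler_wpM2l (incr_weight_ge0 q_gt0 S)
    (lerXn2r #|S| _ _ x_ge)) _.
  - by rewrite nnegrE divr_ge0 ?ler0n.
  - by rewrite nnegrE divr_ge0 ?mulr_ge0 ?exprn_ge0 ?ler0n ?(ltW q_gt0).
  apply: le_trans (incr_weight_le_windows q_gt0 q_le1 S N L_gt0 nbL) _.
  by rewrite ler_wpM2r // ler_weXn2l ?ler1n.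
have -> : 8 / N%:R = 2 / (N%:R / 4) :> R by field; rewrite gt_eqF.
by rewrite expr_div_n mulrAC ler_pdivlMr ?exprn_gt0 ?divr_gt0.
Qed.

(* Windows of length [L ~ 1/(8e)], [b ~ n/L] of them, and [N ~ m/b] points
   of [S] per window on average. *)
Lemma exists_window_parameters (R : realFieldType) (e : R) n m :
  (m <= n)%N -> 2 <= n%:R * e -> 256 * n%:R * e < m%:R ->
  exists L N b, [/\ (0 < L)%N, (n <= b * L)%N, (0 < N * b <= m)%N,
    4 * L%:R * e <= 1 & 8 / N%:R <= 256 * n%:R * e / m%:R].
Proof.
move=> mn ne2 large; have mnR : m%:R <= n%:R :> R by rewrite ler_nat.
have [||L [L_gt0 Ln L4 L8]] := @exists_window_length _ e n; try nra.
pose b := (n %/ L).+1; pose N := (m %/ b)%N.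
have nbL : (n <= b * L)%N by rewrite ltnW // ltn_ceil.
have bL2n : (b * L <= 2 * n)%N.
  by rewrite /b mulSn mul2n -addnn addnC leq_add ?leq_divM.
have b16 : b%:R < 16 * n%:R * e :> R.
  have : b%:R * L%:R <= 2 * n%:R :> R by rewrite -natrM -(natrM _ 2) ler_nat.
  have : 1 <= L%:R :> R by rewrite ler1n.
  nra.
have N_gt0 : (0 < N)%N.
  by rewrite divn_gt0 // -(ler_nat R); apply: ltW; nra.
have mNb : m%:R < 2 * N%:R * b%:R :> R.
  rewrite -(natrM _ 2) -natrM ltr_nat; apply: leq_trans (ltn_ceil m (ltn0Sn (n %/ L))) _.
  by rewrite -/b -/N leq_mul2r mul2n -addnn -addn1 leq_add2l N_gt0 orbT.
exists L, N, b; split; rewrite ?muln_gt0 ?N_gt0 ?leq_divM //.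
have N_gt0R : 0 < N%:R :> R by rewrite ltr0n.
have m_gt0R : 0 < m%:R :> R by apply: le_lt_trans large; nra.
rewrite ler_pdivrMr // mulrAC ler_pdivlMr //; nra.
Qed.

Lemma incr_weight_le_pow (R : realFieldType) n (q : R) (S : {set 'I_n}) :
  0 < q -> 2 <= n%:R * (1 - q) -> 256 * n%:R * (1 - q) < #|S|%:R ->
  incr_weight q S <= (256 * n%:R * (1 - q) / #|S|%:R) ^+ #|S| * mallows_Z n q.
Proof.
move=> q_gt0 ne2 large.
have Sn : (#|S| <= n)%N by rewrite (leq_trans (max_card _)) ?card_ord.
have [L [N [b [L_gt0 nbL /andP[Nb_gt0 NbS] L4 N8]]]] :=
  exists_window_parameters Sn ne2 large.
have N_gt0 : (0 < N)%N by move: Nb_gt0; rewrite muln_gt0 => /andP[].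
have q2L : 1 / 2 <= q ^+ (2 * L).
  have := @bernoulli_le _ (1 - q) (2 * L).
  rewrite natrM (_ : 1 - (1 - q) = q); last by ring.
  by move=> bern; apply: le_trans (bern _); lra.
have q_le1 : q <= 1 by have := ler0n R n; nra.
apply: le_trans (incr_weight_le_block_pow q_gt0 q_le1 L_gt0 nbL N_gt0 NbS q2L) _.
rewrite ler_wpM2r ?(ltW (mallows_Z_gt0 n q_gt0)) // lerXn2r // nnegrE.
  by rewrite divr_ge0 ?ler0n.
by apply: le_trans N8; rewrite divr_ge0 ?ler0n.
Qed.

Lemma ord_homo_ltn_mono m n (I : 'I_m -> 'I_n) :
  {homo I : k l / (k < l)%N} -> {mono I : k l / (k < l)%N}.
Proof.
by move=> I_homo; apply: leW_mono (le_mono (I_homo : {homo I : k l / (k < l)%O})).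
Qed.

Lemma increasing_on_imset m n (I : 'I_m -> 'I_n) :
  {homo I : k l / (k < l)%N} -> forall s : 'S_n,
  [forall k : 'I_m, forall l : 'I_m, ((l : nat) == k.+1) ==> (s (I k) < s (I l))%N] ->
  increasing_on [set I k | k in 'I_m] s.
Proof.
move=> + s; case: m I => [|m] I I_homo /'forall_forallP consec.
  by apply/increasing_onP => x y /imsetP[[]].
have s_mono : {in [pred i | (i < m.+1)%N] &, {homo (fun i => s (I (inord i))) :
    i j / (i < j)%N >-> (i < j)%N}}.
  apply: homo_ltn_in => [y x z|i j _|i _]; rewrite ?inE.
  - exact: ltn_trans.
  - by move=> jm k /andP[_ kj]; apply: ltn_trans jm.
  - move=> im; have := consec (inord i) (inord i.+1).
    by rewrite !inordK ?eqxx // ltnW.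
apply/increasing_onP => _ _ /imsetP[k _ ->] /imsetP[l _ ->] Ikl.
have kl : (k < l)%N by rewrite -(ord_homo_ltn_mono I_homo).
by have := s_mono k l (ltn_ord k) (ltn_ord l) kl; rewrite !inord_val.
Qed.

Lemma card_imset_ord_homo m n (I : 'I_m -> 'I_n) :
  {homo I : k l / (k < l)%N} -> #|[set I k | k in 'I_m]| = m.
Proof.
move=> I_homo; rewrite card_imset ?card_ord //.
exact: inc_inj (le_mono (I_homo : {homo I : k l / (k < l)%O})).
Qed.

Theorem proposition4p4 :
  exists C : nat, (0 < C)%N /\
  forall (R : realFieldType) (n : nat) (q : R),
    (1 <= n)%N -> 0 < q -> q <= 1 - 2%:R / n%:R ->
    forall (m : nat) (I : 'I_m -> 'I_n),
      (1 <= m)%N -> (m <= n)%N ->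
      (forall k l : 'I_m, (k < l)%N -> (I k < I l)%N) ->
      mallows_prob q
        (fun s : 'S_n => [forall k : 'I_m, forall l : 'I_m,
                           ((l : nat) == k.+1) ==> (s (I k) < s (I l))%N])
      <= (C%:R * n%:R * (1 - q) / m%:R) ^+ m.
Proof.
exists 256%N; split => // R n q n_gt0 q_gt0 q_le m I m_gt0 _ I_homo.
have n_gt0R : 0 < n%:R :> R by rewrite ltr0n.
have ne2 : 2 <= n%:R * (1 - q) by rewrite mulrC -ler_pdivrMr //; lra.
have cardS := card_imset_ord_homo I_homo; set S := [set I k | k in 'I_m] in cardS *.
have [small|large] := lerP m%:R (256 * n%:R * (1 - q)).
  apply: le_trans (mallows_prob_le1 _ q_gt0) (exprn_ege1 _ _).
  by rewrite ler_pdivlMr ?mul1r ?ltr0n.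
apply: le_trans (mallows_prob_le_incr_weight q_gt0 (increasing_on_imset I_homo)) _.
rewrite ler_pdivrMr ?mallows_Z_gt0 //.
by have := incr_weight_le_pow (S := S) q_gt0 ne2; rewrite cardS; apply.
Qed.
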